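(* Let $\delta>0$, $n\ge3$, $p\in\mathbb{R}$, let $\varphi_1,\dots,\varphi_{n-1}:[-\delta,\delta]\to\mathbb{R}$ be continuous strictly increasing with $\varphi_j(0)=0$, and $t_1<\dots<t_n$ with $h_j:=t_{j+1}-t_j\le\delta$. Let $H_1,\dots,H_n$ be the associated generalized hat functions, $U_n$ their span, and $s_{i,j}=\langle H_i,H_j\rangle_p$. If $c\in(0,1)$ satisfies $\max_{1\le j\le n-1}\max\{A_{\varphi_j}(h_j),B_{\varphi_j}(h_j)\}\le c$, then $(s_{i,j})$ is row diagonally dominant with factor $c$, and $$\|P^{U_n}\|_{op}\le\max_{t\in[t_1,t_n]}\sum_{j=1}^n|H_j(t)|\cdot\frac{\max_{1\le j\le n-1}\max\{C_{\varphi_j}(h_j),D_{\varphi_j}(h_j)\}}{1-c}.$$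
   Context: $\langle f,g\rangle_p=\int_{t_1}^{t_n}f(t)g(t)e^{pt}\,dt$. $P^{U_n}$ is the $\langle\cdot,\cdot\rangle_p$-orthogonal projection of $C[t_1,t_n]$ onto $U_n$ and $\|P^{U_n}\|_{op}=\sup_{f\neq0}\|P^{U_n}f\|_\infty/\|f\|_\infty$ (sup norm on $[t_1,t_n]$). Row diagonally dominant with factor $c$: $|s_{j-1,j}|+|s_{j,j+1}|\le c\,|s_{j,j}|$ for $j=1,\dots,n$ with $s_{0,1}=s_{n,n+1}=0$. Generalized hat functions: for $2\le j\le n-1$, $H_j(t)=\frac{\varphi_{j-1}(t-t_{j-1})}{\varphi_{j-1}(t_j-t_{j-1})}$ on $[t_{j-1},t_j]$, $H_j(t)=\frac{\varphi_j(t-t_{j+1})}{\varphi_j(t_j-t_{j+1})}$ on $[t_j,t_{j+1}]$, $0$ elsewhere; $H_1=\frac{\varphi_1(t-t_2)}{\varphi_1(t_1-t_2)}$ on $[t_1,t_2]$, $0$ elsewhere; $H_n=\frac{\varphi_{n-1}(t-t_{n-1})}{\varphi_{n-1}(t_n-t_{n-1})}$ on $[t_{n-1},t_n]$, $0$ elsewhere. For $0<h\le\delta$ and $\varphi=\varphi_j$: $A_\varphi(h)=\frac{\varphi(h)}{\varphi(-h)}\frac{\int_0^h\varphi(\tau-h)\varphi(\tau)e^{p\tau}d\tau}{\int_0^h\varphi(\tau)^2e^{p\tau}d\tau}$, $B_\varphi(h)=\frac{\varphi(-h)}{\varphi(h)}\frac{\int_0^h\varphi(\tau-h)\varphi(\tau)e^{p\tau}d\tau}{\int_0^h\varphi(\tau-h)^2e^{p\tau}d\tau}$,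 $C_\varphi(h)=\varphi(h)\frac{\int_0^h\varphi(\tau)e^{p\tau}d\tau}{\int_0^h\varphi(\tau)^2e^{p\tau}d\tau}$, $D_\varphi(h)=\varphi(-h)\frac{\int_0^h\varphi(\tau-h)e^{p\tau}d\tau}{\int_0^h\varphi(\tau-h)^2e^{p\tau}d\tau}$. *)

From Stdlib Require Import Reals Lra List ClassicalEpsilon.
From Coquelicot Require Import Coquelicot.
Open Scope R_scope.

Definition ip (p a b : R) (f g : R -> R) : R :=
  RInt (fun t => f t * g t * exp (p * t)) a b.

Definition sum1n (n : nat) (F : nat -> R) : R :=
  fold_right Rplus 0 (map F (seq 1 n)).

Definition max1n (m : nat) (F : nat -> R) : R :=
  fold_right Rmax (F 1%nat) (map F (seq 1 m)).

Definition supnorm (a b : R) (f : R -> R) : R :=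
  real (Lub_Rbar (fun y => exists t, a <= t <= b /\ y = Rabs (f t))).

Definition hat (n : nat) (phi : nat -> R -> R) (tt : nat -> R) (j : nat) (t : R) : R :=
  if Nat.eqb j 1 then
    (if Rle_dec (tt 1%nat) t then if Rle_dec t (tt 2%nat) then
       phi 1%nat (t - tt 2%nat) / phi 1%nat (tt 1%nat - tt 2%nat) else 0 else 0)
  else if Nat.eqb j n then
    (if Rle_dec (tt (n-1)%nat) t then if Rle_dec t (tt n) then
       phi (n-1)%nat (t - tt (n-1)%nat) / phi (n-1)%nat (tt n - tt (n-1)%nat) else 0 else 0)
  else
    (if Rle_dec (tt (j-1)%nat) t then
       if Rle_dec t (tt j) then
         phi (j-1)%nat (t - tt (j-1)%nat) / phi (j-1)%nat (tt j - tt (j-1)%nat)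
       else if Rle_dec t (tt (j+1)%nat) then
         phi j (t - tt (j+1)%nat) / phi j (tt j - tt (j+1)%nat)
       else 0
     else 0).

Definition in_span (n : nat) (H : nat -> R -> R) (g : R -> R) : Prop :=
  exists a : nat -> R, forall t, g t = sum1n n (fun j => a j * H j t).

(* <.,.>_p-orthogonal projection of f onto U_n (on [a,b]): the element g of U_n
   with <f - g, H_i>_p = 0 for all i (chosen by description; it exists and is
   unique since the Gram matrix is positive definite). *)
Definition is_orth_proj (p a b : R) (n : nat) (H : nat -> R -> R) (f g : R -> R) : Prop :=
  in_span n H g /\
  forall i, (1 <= i <= n)%nat -> ip p a b (fun t => f t - g t) (H i) = 0.

Definition orth_proj (p a b : R) (n : nat) (H : nat -> R -> R) (f : R -> R) : R -> R :=
  epsilon (inhabits (fun _ : R => 0)) (is_orth_proj p a b n H f).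

Definition cont_on (a b : R) (f : R -> R) : Prop :=
  forall x, a <= x <= b ->
    filterlim f (within (fun y => a <= y <= b) (locally x)) (locally (f x)).

Definition opnorm_proj (p a b : R) (n : nat) (H : nat -> R -> R) : Rbar :=
  Lub_Rbar (fun r => exists f : R -> R,
    cont_on a b f /\ (exists t, a <= t <= b /\ f t <> 0) /\
    r = supnorm a b (orth_proj p a b n H f) / supnorm a b f).

Definition Aphi (p : R) (phi : R -> R) (h : R) : R :=
  phi h / phi (- h) *
  (RInt (fun s => phi (s - h) * phi s * exp (p * s)) 0 h /
   RInt (fun s => phi s ^ 2 * exp (p * s)) 0 h).
Definition Bphi (p : R) (phi : R -> R) (h : R) : R :=
  phi (- h) / phi h *
  (RInt (fun s => phi (s - h) * phi s * exp (p * s)) 0 h /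
   RInt (fun s => phi (s - h) ^ 2 * exp (p * s)) 0 h).
Definition Cphi (p : R) (phi : R -> R) (h : R) : R :=
  phi h *
  (RInt (fun s => phi s * exp (p * s)) 0 h /
   RInt (fun s => phi s ^ 2 * exp (p * s)) 0 h).
Definition Dphi (p : R) (phi : R -> R) (h : R) : R :=
  phi (- h) *
  (RInt (fun s => phi (s - h) * exp (p * s)) 0 h /
   RInt (fun s => phi (s - h) ^ 2 * exp (p * s)) 0 h).

(* row diagonal dominance with factor c of an n x n matrix s (indices 1..n),
   with the convention s_{0,1} = s_{n,n+1} = 0 *)
Definition row_diag_dom (n : nat) (s : nat -> nat -> R) (c : R) : Prop :=
  forall j, (1 <= j <= n)%nat ->
    (if Nat.eqb j 1 then 0 else Rabs (s (j-1)%nat j)) +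
    (if Nat.eqb j n then 0 else Rabs (s j (j+1)%nat)) <= c * Rabs (s j j).

(* Only neighbouring hats overlap, so the Gram matrix s_ij = <H_i, H_j>_p is tridiagonal and
   each entry is a sum of at most two cell contributions.  After the change of variable
   s = t - t_k, the contributions of cell k are e^{p t_k} times integrals over [0, h_k]
   whose ratios are exactly A, B (cross term / diagonal terms) and C, D (moments / diagonal
   terms).  Hence A, B <= c gives row dominance with factor c (part one).  For part two the
   coefficients a of P f = sum_j a_j H_j solve the tridiagonal normal equations with
   right-hand sides |<f, H_j>_p| <= ||f|| * moment_j <= ||f|| max(C, D) s_jj; the row of the
   largest |a_j| then gives |a_j| <= ||f|| max(C, D) / (1 - c), and summing against the hats
   yields the bound. *)

From Stdlib Require Import Reals Lra Lia List ClassicalEpsilon.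
From Coquelicot Require Import Coquelicot.
Open Scope R_scope.

Lemma cont_mult (f g : R -> R) x :
  continuous f x -> continuous g x -> continuous (fun y => f y * g y) x.
Proof. exact (continuous_mult f g x). Qed.

Lemma cont_minus (f g : R -> R) x :
  continuous f x -> continuous g x -> continuous (fun y => f y - g y) x.
Proof. exact (continuous_minus f g x). Qed.

Lemma cont_div_const (f : R -> R) k x : continuous f x -> continuous (fun y => f y / k) x.
Proof. intros. apply cont_mult; [auto | apply continuous_const]. Qed.

Lemma cont_const (k x : R) : continuous (fun _ : R => k) x.
Proof. apply continuous_const. Qed.

Lemma cont_exp_weight (p x : R) : continuous (fun t => exp (p * t)) x.
Proof.
  apply continuous_exp_comp, cont_mult; [apply cont_const | apply continuous_id].
Qed.

Lemma cont_shift (g : R -> R) (a x : R) :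
  (forall y, continuous g y) -> continuous (fun t => g (t - a)) x.
Proof.
  intros Hg. apply (continuous_comp (fun t => t - a) g); [|apply Hg].
  apply cont_minus; [apply continuous_id | apply cont_const].
Qed.

Create HintDb cont.
#[export] Hint Resolve cont_mult cont_div_const cont_minus cont_const cont_exp_weight cont_shift : cont.

(* Clamping into [lo, hi]: composing with it turns a function continuous on [lo, hi]
   into a function continuous on all of R that agrees with it on [lo, hi]. *)
Definition clamp (lo hi x : R) : R := Rmax lo (Rmin hi x).

Lemma clamp_id lo hi x : lo <= x <= hi -> clamp lo hi x = x.
Proof. intros. unfold clamp, Rmax, Rmin. repeat destruct Rle_dec; lra. Qed.

Lemma clamp_in lo hi x : lo <= hi -> lo <= clamp lo hi x <= hi.
Proof. intros. unfold clamp, Rmax, Rmin. repeat destruct Rle_dec; lra. Qed.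

Lemma clamp_lipschitz lo hi x y : lo <= hi -> Rabs (clamp lo hi x - clamp lo hi y) <= Rabs (x - y).
Proof.
  intros. unfold clamp, Rmax, Rmin.
  repeat destruct Rle_dec; unfold Rabs; repeat destruct Rcase_abs; lra.
Qed.

Lemma continuous_clamp lo hi (f : R -> R) : lo <= hi -> cont_on lo hi f ->
  forall x, continuous (fun y => f (clamp lo hi y)) x.
Proof.
  intros Hlh Hf x.
  apply (filterlim_comp _ _ _ (clamp lo hi) f (locally x)
           (within (fun y => lo <= y <= hi) (locally (clamp lo hi x)))).
  - intros P [eps HP]. exists eps. intros y Hy. apply HP; [|apply clamp_in; auto].
    unfold ball in *; simpl in *; unfold AbsRing_ball, abs, minus, plus, opp in *; simpl in *.
    eapply Rle_lt_trans; [apply clamp_lipschitz; auto | exact Hy].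
  - apply Hf, clamp_in; auto.
Qed.

Lemma cont_on_bounded a b (f : R -> R) : a <= b -> cont_on a b f ->
  exists U, forall s, a <= s <= b -> Rabs (f s) <= U.
Proof.
  intros Hab Hf. set (fc := fun t => f (clamp a b t)).
  destruct (continuity_ab_maj (fun t => Rabs (fc t)) a b Hab) as [M [HM _]].
  { intros x _. apply (continuity_pt_comp fc Rabs x); [|apply Rcontinuity_abs].
    apply continuity_pt_filterlim, continuous_clamp; auto. }
  exists (Rabs (fc M)). intros s Hs. specialize (HM s Hs). unfold fc in HM.
  rewrite clamp_id in HM; auto.
Qed.

Lemma RInt_open_ext (F G : R -> R) a b : a < b -> (forall t, a < t < b -> F t = G t) ->
  (forall x, continuous G x) -> ex_RInt F a b /\ RInt F a b = RInt G a b.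
Proof.
  intros Hab HFG HG.
  assert (Heq : forall x, Rmin a b < x < Rmax a b -> G x = F x).
  { intros x Hx. rewrite Rmin_left, Rmax_right in Hx by lra. symmetry; auto. }
  split; [|symmetry; apply RInt_ext; auto].
  apply (ex_RInt_ext G); auto.
  exact (@ex_RInt_continuous R_CompleteNormedModule G a b (fun x _ => HG x)).
Qed.

Lemma RInt_shift_weight (p K a h : R) (G : R -> R) : (forall x, continuous G x) ->
  RInt (fun t => K * G (t - a) * exp (p * t)) a (a + h) =
  K * exp (p * a) * RInt (fun s => G s * exp (p * s)) 0 h.
Proof.
  intros HG.
  set (F := fun t => K * G (t - a) * exp (p * t)).
  assert (HF : forall x, continuous F x) by (intros; unfold F; auto with cont).
  assert (Hex : ex_RInt (fun s => G s * exp (p * s)) 0 h).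
  { apply (@ex_RInt_continuous R_CompleteNormedModule). intros x _. auto with cont. }
  pose proof (RInt_comp_lin F 1 a 0 h) as E.
  replace (1 * 0 + a) with a in E by ring. replace (1 * h + a) with (a + h) in E by ring.
  rewrite <- E by exact (@ex_RInt_continuous R_CompleteNormedModule F _ _ (fun x _ => HF x)).
  transitivity (RInt (fun s => K * exp (p * a) * (G s * exp (p * s))) 0 h).
  2:{ exact (RInt_scal _ 0 h (K * exp (p * a)) Hex). }
  apply RInt_ext. intros x _. unfold F, scal; simpl; unfold mult; simpl.
  replace (1 * x + a - a) with x by ring. replace (p * (1 * x + a)) with (p * x + p * a) by ring.
  rewrite exp_plus. ring.
Qed.

Lemma sum1n_S n F : sum1n (S n) F = sum1n n F + F (S n).
Proof.
  unfold sum1n. rewrite seq_S, map_app, fold_right_app. simpl.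
  replace (1 + n)%nat with (S n) by lia.
  induction (map F (seq 1 n)) as [|x l IH]; simpl; [ring | rewrite IH; ring].
Qed.

Lemma sum1n_ext n F G : (forall j, (1 <= j <= n)%nat -> F j = G j) -> sum1n n F = sum1n n G.
Proof.
  induction n as [|n IH]; intros H; [reflexivity|].
  rewrite !sum1n_S, IH, (H (S n)); [reflexivity | lia | intros; apply H; lia].
Qed.

Lemma sum1n_plus n F G : sum1n n (fun j => F j + G j) = sum1n n F + sum1n n G.
Proof. induction n; [unfold sum1n; simpl; ring|]. rewrite !sum1n_S, IHn; ring. Qed.

Lemma sum1n_scal n k F : sum1n n (fun j => k * F j) = k * sum1n n F.
Proof. induction n; [unfold sum1n; simpl; ring|]. rewrite !sum1n_S, IHn; ring. Qed.

Lemma sum1n_mult_r n k F : sum1n n F * k = sum1n n (fun j => F j * k).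
Proof. induction n; [unfold sum1n; simpl; ring|]. rewrite !sum1n_S, <- IHn; ring. Qed.

Lemma sum1n_le n F G : (forall j, (1 <= j <= n)%nat -> F j <= G j) -> sum1n n F <= sum1n n G.
Proof.
  induction n as [|n IH]; intros H; [unfold sum1n; simpl; lra|].
  rewrite !sum1n_S. pose proof (H (S n) ltac:(lia)).
  assert (sum1n n F <= sum1n n G) by (apply IH; intros; apply H; lia). lra.
Qed.

Lemma sum1n_abs n F : Rabs (sum1n n F) <= sum1n n (fun j => Rabs (F j)).
Proof.
  induction n; [unfold sum1n; simpl; rewrite Rabs_R0; lra|].
  rewrite !sum1n_S. eapply Rle_trans; [apply Rabs_triang | lra].
Qed.

Lemma RInt_sum1n n (F : nat -> R -> R) a b : (forall j, (1 <= j <= n)%nat -> ex_RInt (F j) a b) ->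
  ex_RInt (fun t => sum1n n (fun j => F j t)) a b /\
  RInt (fun t => sum1n n (fun j => F j t)) a b = sum1n n (fun j => RInt (F j) a b).
Proof.
  induction n as [|n IH]; intros HF.
  - unfold sum1n; simpl. split; [apply ex_RInt_const | rewrite RInt_const; apply Rmult_0_r].
  - destruct IH as [X E]; [intros; apply HF; lia|]. pose proof (HF (S n) ltac:(lia)) as XS.
    assert (Hext : forall t, sum1n (S n) (fun j => F j t) = sum1n n (fun j => F j t) + F (S n) t)
      by (intros; apply sum1n_S).
    split.
    + apply (ex_RInt_ext (fun t => sum1n n (fun j => F j t) + F (S n) t)); [intros; auto|].
      exact (ex_RInt_plus _ _ a b X XS).
    + rewrite (RInt_ext _ (fun t => sum1n n (fun j => F j t) + F (S n) t)) by (intros; auto).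
      rewrite sum1n_S, <- E. exact (RInt_plus _ _ a b X XS).
Qed.

Lemma sum1n_single n k x :
  sum1n n (fun j => if Nat.eqb j k then x else 0) = if (Nat.leb 1 k && Nat.leb k n)%bool then x else 0.
Proof.
  induction n as [|n IH].
  - destruct (Nat.leb_spec 1 k); destruct (Nat.leb_spec k 0); simpl; try lia; reflexivity.
  - rewrite sum1n_S, IH.
    destruct (Nat.eqb_spec (S n) k); destruct (Nat.leb_spec 1 k);
      destruct (Nat.leb_spec k n); destruct (Nat.leb_spec k (S n)); simpl; try lia; ring.
Qed.

Lemma sum1n_three n i F : (1 <= i <= n)%nat ->
  (forall j, (1 <= j <= n)%nat -> j <> (i - 1)%nat -> j <> i -> j <> S i -> F j = 0) ->
  sum1n n F = (if Nat.eqb i 1 then 0 else F (i - 1)%nat) + F i + (if Nat.eqb i n then 0 else F (S i)).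
Proof.
  intros Hi HF.
  set (x1 := if Nat.eqb i 1 then 0 else F (i - 1)%nat).
  set (x3 := if Nat.eqb i n then 0 else F (S i)).
  rewrite (sum1n_ext n F (fun j => (if Nat.eqb j (i - 1) then x1 else 0) +
             (if Nat.eqb j i then F i else 0) + (if Nat.eqb j (S i) then x3 else 0))).
  - rewrite !sum1n_plus, !sum1n_single. unfold x1, x3.
    destruct (Nat.eqb_spec i 1); destruct (Nat.eqb_spec i n);
      destruct (Nat.leb_spec 1 (i - 1)); destruct (Nat.leb_spec (i - 1) n);
      destruct (Nat.leb_spec 1 i); destruct (Nat.leb_spec i n);
      destruct (Nat.leb_spec 1 (S i)); destruct (Nat.leb_spec (S i) n); simpl; try lia; ring.
  - intros j Hj. unfold x1, x3.
    destruct (Nat.eqb_spec j (i - 1)); destruct (Nat.eqb_spec j i); destruct (Nat.eqb_spec j (S i));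
      destruct (Nat.eqb_spec i 1); destruct (Nat.eqb_spec i n);
      try lia; subst; try ring; rewrite HF; auto; ring.
Qed.

Lemma max1n_ge m F j : (1 <= j <= m)%nat -> F j <= max1n m F.
Proof.
  intros Hj. unfold max1n. assert (HIn : In j (seq 1 m)) by (apply in_seq; lia).
  induction (seq 1 m) as [|x l IH]; simpl; [contradiction|].
  destruct HIn as [->|HIn]; [apply Rmax_l | eapply Rle_trans; [apply IH; auto | apply Rmax_r]].
Qed.

Lemma argmax_abs n (a : nat -> R) : (1 <= n)%nat ->
  exists j, (1 <= j <= n)%nat /\ forall k, (1 <= k <= n)%nat -> Rabs (a k) <= Rabs (a j).
Proof.
  induction n as [|n IH]; intros Hn; [lia|].
  destruct (Nat.eq_dec n 0) as [->|Hn0].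
  { exists 1%nat. split; [lia|]. intros k Hk. replace k with 1%nat by lia. lra. }
  destruct (IH ltac:(lia)) as [j [Hj Hmax]].
  destruct (Rle_dec (Rabs (a (S n))) (Rabs (a j))).
  - exists j. split; [lia|]. intros k Hk.
    destruct (Nat.eq_dec k (S n)); [subst; auto | apply Hmax; lia].
  - exists (S n). split; [lia|]. intros k Hk.
    destruct (Nat.eq_dec k (S n)); [subst; lra|]. specialize (Hmax k ltac:(lia)). lra.
Qed.

Lemma supnorm_ge a b (f : R -> R) t : (exists U, forall s, a <= s <= b -> Rabs (f s) <= U) ->
  a <= t <= b -> Rabs (f t) <= supnorm a b f.
Proof.
  intros [U HU] Ht. unfold supnorm.
  set (E := fun y => exists t, a <= t <= b /\ y = Rabs (f t)).
  destruct (Lub_Rbar_correct E) as [Hub Hlub].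
  specialize (Hub (Rabs (f t)) ltac:(exists t; auto)).
  specialize (Hlub U ltac:(intros y [s [Hs ->]]; simpl; auto)).
  destruct (Lub_Rbar E); simpl in *; auto; contradiction.
Qed.

Lemma supnorm_le a b (f : R -> R) U : a <= b -> (forall s, a <= s <= b -> Rabs (f s) <= U) ->
  supnorm a b f <= U.
Proof.
  intros Hab HU. unfold supnorm.
  set (E := fun y => exists t, a <= t <= b /\ y = Rabs (f t)).
  destruct (Lub_Rbar_correct E) as [Hub Hlub].
  specialize (Hub (Rabs (f a)) ltac:(exists a; split; [lra | auto])).
  specialize (Hlub U ltac:(intros y [s [Hs ->]]; simpl; auto)).
  destruct (Lub_Rbar E); simpl in *; auto; contradiction.
Qed.

Lemma supnorm_nonneg a b (f : R -> R) : a <= b ->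
  (exists U, forall s, a <= s <= b -> Rabs (f s) <= U) -> 0 <= supnorm a b f.
Proof.
  intros Hab HB. eapply Rle_trans; [apply Rabs_pos | apply (supnorm_ge a b f a HB)]. lra.
Qed.

(* Row i of the symmetric tridiagonal m x m matrix with diagonal d and off-diagonal e
   (e i couples the unknowns i and i+1) applied to the vector a. *)
Definition trirow (m : nat) (d e a : nat -> R) (i : nat) : R :=
  (if Nat.eqb i 1 then 0 else e (i - 1)%nat * a (i - 1)%nat) + d i * a i +
  (if Nat.eqb i m then 0 else e i * a (S i)).

Definition tri_dominant (m : nat) (d e : nat -> R) (c : R) : Prop :=
  forall i, (1 <= i <= m)%nat -> 0 < d i /\
    (if Nat.eqb i 1 then 0 else Rabs (e (i - 1)%nat)) + (if Nat.eqb i m then 0 else Rabs (e i))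
      <= c * d i.

(* Eliminating the last unknown keeps dominance: row m loses its neighbour |e m| while its
   diagonal drops by q = e m ^ 2 / d (m+1), and c q <= c ^ 2 |e m| <= |e m|. *)
Lemma tri_dominant_schur m d e c : (1 <= m)%nat -> 0 <= c < 1 -> tri_dominant (S m) d e c ->
  tri_dominant m (fun i => if Nat.eqb i m then d m - e m * e m / d (S m) else d i) e c.
Proof.
  intros Hm Hc Hdom i Hi.
  destruct (Hdom m ltac:(lia)) as [Hdm Rm]. destruct (Hdom (S m) ltac:(lia)) as [HdS RS].
  rewrite (proj2 (Nat.eqb_neq (S m) 1)), Nat.eqb_refl in RS by lia.
  rewrite (proj2 (Nat.eqb_neq m (S m))) in Rm by lia.
  replace (S m - 1)%nat with m in RS by lia.
  set (q := e m * e m / d (S m)).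
  assert (Hq : q * d (S m) = Rabs (e m) * Rabs (e m)).
  { unfold q. rewrite <- Rabs_mult, Rabs_right by nra. field. lra. }
  assert (L : 0 <= (if Nat.eqb m 1 then 0 else Rabs (e (m - 1)%nat)))
    by (destruct (Nat.eqb m 1); [lra | apply Rabs_pos]).
  pose proof (Rabs_pos (e m)).
  assert (Hqc : q <= c * Rabs (e m)) by nra.
  destruct (Nat.eqb_spec i m) as [->|Him].
  - assert (Hem : Rabs (e m) <= c * d m) by lra.
    assert (c * Rabs (e m) <= c * (c * d m)) by (apply Rmult_le_compat_l; lra).
    assert (c * q <= c * (c * Rabs (e m))) by (apply Rmult_le_compat_l; lra).
    assert (c * c * Rabs (e m) <= 1 * Rabs (e m)) by (apply Rmult_le_compat_r; nra).
    split; nra.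
  - destruct (Hdom i ltac:(lia)) as [Hdi Ri]. split; [auto|].
    rewrite (proj2 (Nat.eqb_neq i (S m))) in Ri by lia.
    exact Ri.
Qed.

(* Diagonally dominant tridiagonal systems are solvable (Gaussian elimination from the
   last unknown upwards). *)
Lemma tri_solve m d e b c : (1 <= m)%nat -> 0 <= c < 1 -> tri_dominant m d e c ->
  exists a, forall i, (1 <= i <= m)%nat -> trirow m d e a i = b i.
Proof.
  revert d b. induction m as [|m IH]; intros d b Hm Hc Hdom; [lia|].
  destruct (Nat.eq_dec m 0) as [->|Hm0].
  { destruct (Hdom 1%nat ltac:(lia)) as [Hd _]. exists (fun _ => b 1%nat / d 1%nat).
    intros i Hi. replace i with 1%nat by lia. unfold trirow. simpl. field. lra. }
  destruct (Hdom (S m) ltac:(lia)) as [HdS _].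
  set (d' := fun i => if Nat.eqb i m then d m - e m * e m / d (S m) else d i).
  set (b' := fun i => if Nat.eqb i m then b m - e m * b (S m) / d (S m) else b i).
  destruct (IH d' b' ltac:(lia) Hc (tri_dominant_schur m d e c ltac:(lia) Hc Hdom)) as [a' Ha'].
  exists (fun i => if Nat.eqb i (S m) then (b (S m) - e m * a' m) / d (S m) else a' i).
  intros i Hi. unfold trirow.
  destruct (Nat.eqb_spec i (S m)) as [->|HiS].
  - destruct (Nat.eqb_spec (S m) 1); [lia|]. replace (S m - 1)%nat with m by lia.
    destruct (Nat.eqb_spec m (S m)); [lia|]. field. lra.
  - specialize (Ha' i ltac:(lia)). unfold trirow, d', b' in Ha'.
    destruct (Nat.eqb_spec (i - 1) (S m)); [lia|].
    destruct (Nat.eqb_spec i m) as [Him|Him].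
    + subst i. rewrite Nat.eqb_refl.
      assert (E : e m * ((b (S m) - e m * a' m) / d (S m)) =
                  e m * b (S m) / d (S m) - e m * e m / d (S m) * a' m) by (field; lra).
      rewrite E. lra.
    + destruct (Nat.eqb_spec (S i) (S m)); [lia|]. exact Ha'.
Qed.

(* A priori bound: if every right-hand side is at most K times its diagonal entry, every
   unknown is at most K / (1 - c); look at the row of the largest unknown. *)
Lemma tri_bound m d e a b c K : (1 <= m)%nat -> 0 <= c < 1 -> tri_dominant m d e c ->
  (forall i, (1 <= i <= m)%nat -> trirow m d e a i = b i) ->
  (forall i, (1 <= i <= m)%nat -> Rabs (b i) <= K * d i) ->
  forall k, (1 <= k <= m)%nat -> Rabs (a k) <= K / (1 - c).
Proof.
  intros Hm Hc Hdom Ha Hb.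
  destruct (argmax_abs m a Hm) as [j [Hj Hmax]]. intros k Hk.
  eapply Rle_trans; [apply Hmax; auto|]. set (M := Rabs (a j)).
  destruct (Hdom j Hj) as [Hdj Rj]. pose proof (Ha j Hj) as E. pose proof (Hb j Hj) as Bj.
  unfold trirow in E.
  assert (T1 : Rabs (if Nat.eqb j 1 then 0 else e (j - 1)%nat * a (j - 1)%nat) <=
               (if Nat.eqb j 1 then 0 else Rabs (e (j - 1)%nat)) * M).
  { destruct (Nat.eqb_spec j 1); [rewrite Rabs_R0; lra|].
    rewrite Rabs_mult. apply Rmult_le_compat_l; [apply Rabs_pos | apply Hmax; lia]. }
  assert (T3 : Rabs (if Nat.eqb j m then 0 else e j * a (S j)) <=
               (if Nat.eqb j m then 0 else Rabs (e j)) * M).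
  { destruct (Nat.eqb_spec j m); [rewrite Rabs_R0; lra|].
    rewrite Rabs_mult. apply Rmult_le_compat_l; [apply Rabs_pos | apply Hmax; lia]. }
  revert E T1 T3 Rj.
  set (X1 := if Nat.eqb j 1 then 0 else _). set (X3 := if Nat.eqb j m then 0 else _).
  set (L1 := if Nat.eqb j 1 then 0 else _). set (L3 := if Nat.eqb j m then 0 else _).
  intros E T1 T3 Rj.
  assert (HM : d j * M <= Rabs (b j) + (L1 + L3) * M).
  { unfold M. rewrite <- (Rabs_right (d j)), <- Rabs_mult by lra.
    replace (d j * a j) with (b j + - X1 + - X3) by lra.
    pose proof (Rabs_triang (b j + - X1) (- X3)). pose proof (Rabs_triang (b j) (- X1)).
    rewrite Rabs_Ropp in *. fold M. lra. }
  assert (0 <= M) by apply Rabs_pos.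
  assert ((L1 + L3) * M <= c * d j * M) by (apply Rmult_le_compat_r; lra).
  assert (Hfin : (1 - c) * M <= K) by (apply (Rmult_le_reg_r (d j)); nra).
  apply (Rmult_le_reg_l (1 - c)); [lra|].
  replace ((1 - c) * (K / (1 - c))) with K by (field; lra). exact Hfin.
Qed.

Section Partition.
Variables (n : nat) (tt : nat -> R).
Hypothesis Ht : forall j, (1 <= j <= n - 1)%nat -> tt j < tt (S j).

Lemma nodes_lt i j : (1 <= i)%nat -> (i < j <= n)%nat -> tt i < tt j.
Proof.
  intros Hi [Hij Hj]. induction j as [|j IH]; [lia|].
  destruct (Nat.eq_dec i j) as [->|]; [apply Ht; lia|].
  apply Rlt_trans with (tt j); [apply IH; lia | apply Ht; lia].
Qed.

Lemma nodes_le i j : (1 <= i)%nat -> (i <= j <= n)%nat -> tt i <= tt j.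
Proof. intros. destruct (Nat.eq_dec i j) as [->|]; [lra | left; apply nodes_lt; lia]. Qed.

Lemma point_in_cell m t : (2 <= m <= n)%nat -> tt 1%nat <= t <= tt m ->
  exists k, (1 <= k <= m - 1)%nat /\ tt k <= t <= tt (S k).
Proof.
  induction m as [|m IH]; intros Hm Htm; [lia|].
  destruct (Nat.eq_dec m 1) as [->|]; [exists 1%nat; split; [lia | auto]|].
  destruct (Rle_dec t (tt m)).
  - destruct IH as [k [Hk Hkt]]; [lia | lra |]. exists k. split; [lia | auto].
  - exists m. split; [lia | lra].
Qed.

(* F is given on each closed cell by a function continuous on R: the integrands built
   from hat functions are of this kind. *)
Definition cellwise_continuous (F : R -> R) : Prop :=
  forall k, (1 <= k <= n - 1)%nat ->
    exists G, (forall x, continuous G x) /\ forall t, tt k <= t <= tt (S k) -> F t = G t.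

Lemma cellwise_mult F G : cellwise_continuous F -> cellwise_continuous G ->
  cellwise_continuous (fun t => F t * G t).
Proof.
  intros HF HG k Hk. destruct (HF k Hk) as [F' [HF' EF]]. destruct (HG k Hk) as [G' [HG' EG]].
  exists (fun t => F' t * G' t). split; [intros; auto with cont |].
  intros t Htk. rewrite EF, EG; auto.
Qed.

Lemma cellwise_weight p : cellwise_continuous (fun t => exp (p * t)).
Proof. intros k Hk. exists (fun t => exp (p * t)). split; auto with cont. Qed.

Lemma cellwise_cont_on f : cont_on (tt 1%nat) (tt n) f -> cellwise_continuous f.
Proof.
  intros Hf k Hk. exists (fun t => f (clamp (tt 1%nat) (tt n) t)). split.
  - apply continuous_clamp; auto. apply nodes_le; lia.
  - intros t Htk. rewrite clamp_id; auto.
    split; [apply Rle_trans with (tt k) | apply Rle_trans with (tt (S k))];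
      (lra || apply nodes_le; lia).
Qed.

Lemma cellwise_ex_RInt F i m : cellwise_continuous F -> (1 <= i <= m)%nat -> (m <= n)%nat ->
  ex_RInt F (tt i) (tt m).
Proof.
  intros HF Hi Hm. induction m as [|m IH]; [lia|].
  destruct (Nat.eq_dec i (S m)) as [->|]; [apply ex_RInt_point|].
  apply (ex_RInt_Chasles _ _ (tt m)); [apply IH; lia|].
  destruct (HF m ltac:(lia)) as [G [HG HFG]].
  apply (RInt_open_ext F G); [apply Ht; lia | intros; apply HFG; lra | auto].
Qed.

Lemma RInt_cells_zero F i m : (1 <= i <= m)%nat -> (m <= n)%nat ->
  (forall k, (i <= k < m)%nat -> forall t, tt k < t < tt (S k) -> F t = 0) ->
  RInt F (tt i) (tt m) = 0.
Proof.
  intros Hi Hm HF.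
  enough (ex_RInt F (tt i) (tt m) /\ RInt F (tt i) (tt m) = 0) by tauto.
  induction m as [|m IH]; [lia|].
  destruct (Nat.eq_dec i (S m)) as [->|]; [split; [apply ex_RInt_point | exact (RInt_point _ F)]|].
  destruct IH as [X0 E0]; [lia | lia | intros k Hk; apply HF; lia |].
  destruct (RInt_open_ext F (fun _ => 0) (tt m) (tt (S m))) as [X1 E1];
    [apply Ht; lia | apply HF; lia | intros; apply cont_const |].
  split; [apply (ex_RInt_Chasles _ _ (tt m)); auto|].
  rewrite <- (RInt_Chasles F _ (tt m)), E0, E1, RInt_const by auto.
  rewrite Rmult_0_r. unfold plus; simpl; lra.
Qed.

Lemma RInt_two_cells F j : (2 <= n)%nat -> cellwise_continuous F -> (1 <= j <= n)%nat ->
  (forall k, (1 <= k <= n - 1)%nat -> k <> (j - 1)%nat -> k <> j ->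
     forall t, tt k < t < tt (S k) -> F t = 0) ->
  RInt F (tt 1%nat) (tt n) =
  (if Nat.eqb j 1 then 0 else RInt F (tt (j - 1)%nat) (tt j)) +
  (if Nat.eqb j n then 0 else RInt F (tt j) (tt (S j))).
Proof.
  intros Hn HF Hj HZ. pose proof (cellwise_ex_RInt F) as X.
  destruct (Nat.eqb_spec j 1) as [->|]; [|destruct (Nat.eqb_spec j n) as [->|]].
  - destruct (Nat.eqb_spec 1 n); [lia|].
    rewrite <- (RInt_Chasles F _ (tt 2%nat)) by (apply X; auto; lia).
    rewrite (RInt_cells_zero F 2 n) by (auto; try lia; intros k Hk; apply HZ; lia). unfold plus; simpl; lra.
  - rewrite <- (RInt_Chasles F _ (tt (n - 1)%nat)) by (apply X; auto; lia).
    rewrite (RInt_cells_zero F 1 (n - 1)) by (auto; try lia; intros k Hk; apply HZ; lia). unfold plus; simpl; lra.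
  - rewrite <- (RInt_Chasles F _ (tt (j - 1)%nat)) by (apply X; auto; lia).
    rewrite (RInt_cells_zero F 1 (j - 1)) by (auto; try lia; intros k Hk; apply HZ; lia).
    rewrite <- (RInt_Chasles F _ (tt j)) by (apply X; auto; lia).
    rewrite <- (RInt_Chasles F (tt j) (tt (S j))) by (apply X; auto; lia).
    rewrite (RInt_cells_zero F (S j) n) by (auto; try lia; intros k Hk; apply HZ; lia). unfold plus; simpl; lra.
Qed.
End Partition.

Definition clamped (delta : R) (phi : R -> R) (x : R) : R := phi (clamp (- delta) delta x).

Section Cell.
(* One cell of length h: phi is continuous and strictly increasing on [-delta, delta] with
   phi 0 = 0, and the two hat pieces living on the cell [0, h] are phi s / phi h (rising)
   and phi (s - h) / phi (- h) (falling). *)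
Variables (p delta : R) (phi : R -> R).
Hypothesis Hdelta : 0 < delta.
Hypothesis Hcont : cont_on (- delta) delta phi.
Hypothesis Hincr : forall x y, - delta <= x <= delta -> - delta <= y <= delta -> x < y -> phi x < phi y.
Hypothesis Hphi0 : phi 0 = 0.

Lemma phi_pos x : 0 < x <= delta -> 0 < phi x.
Proof. intros. rewrite <- Hphi0. apply Hincr; lra. Qed.

Lemma phi_neg x : - delta <= x < 0 -> phi x < 0.
Proof. intros. rewrite <- Hphi0. apply Hincr; lra. Qed.

Lemma phi_mono x y : - delta <= x <= delta -> - delta <= y <= delta -> x <= y -> phi x <= phi y.
Proof. intros. destruct (Req_dec x y) as [->|]; [lra | left; apply Hincr; lra]. Qed.

Lemma clamped_continuous x : continuous (clamped delta phi) x.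
Proof. apply continuous_clamp; auto. lra. Qed.

Lemma clamped_eq x : - delta <= x <= delta -> clamped delta phi x = phi x.
Proof. intros. unfold clamped. rewrite clamp_id; auto. Qed.

#[local] Hint Resolve clamped_continuous : cont.

Variable h : R.
Hypothesis Hh : 0 < h <= delta.

(* The weighted integrals over [0, h] entering the definitions of A, B, C, D. *)
Definition cell_LL : R := RInt (fun s => phi s ^ 2 * exp (p * s)) 0 h.
Definition cell_RR : R := RInt (fun s => phi (s - h) ^ 2 * exp (p * s)) 0 h.
Definition cell_LR : R := RInt (fun s => phi (s - h) * phi s * exp (p * s)) 0 h.
Definition cell_L : R := RInt (fun s => phi s * exp (p * s)) 0 h.
Definition cell_R : R := RInt (fun s => phi (s - h) * exp (p * s)) 0 h.

Lemma cell_LL_pos : 0 < cell_LL.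
Proof.
  unfold cell_LL.
  destruct (RInt_open_ext (fun s => phi s ^ 2 * exp (p * s))
              (fun s => clamped delta phi s ^ 2 * exp (p * s)) 0 h) as [_ ->];
    [lra | intros s Hs; rewrite clamped_eq; auto; lra | intros; simpl; auto with cont |].
  apply RInt_gt_0; [lra | | intros; simpl; auto with cont].
  intros x Hx. rewrite clamped_eq by lra.
  pose proof (phi_pos x ltac:(lra)). pose proof (exp_pos (p * x)).
  apply Rmult_lt_0_compat; [apply pow_lt|]; auto.
Qed.

Lemma cell_RR_pos : 0 < cell_RR.
Proof.
  unfold cell_RR.
  destruct (RInt_open_ext (fun s => phi (s - h) ^ 2 * exp (p * s))
              (fun s => clamped delta phi (s - h) ^ 2 * exp (p * s)) 0 h) as [_ ->];
    [lra | intros s Hs; rewrite clamped_eq; auto; lra | intros; simpl; auto with cont |].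
  apply RInt_gt_0; [lra | | intros; simpl; auto with cont].
  intros x Hx. rewrite clamped_eq by lra.
  pose proof (phi_neg (x - h) ltac:(lra)). pose proof (exp_pos (p * x)).
  apply Rmult_lt_0_compat; [simpl; nra | auto].
Qed.

(* The rising and falling pieces have opposite signs inside the cell. *)
Lemma cell_LR_nonpos : cell_LR <= 0.
Proof.
  unfold cell_LR.
  destruct (RInt_open_ext (fun s => phi (s - h) * phi s * exp (p * s))
              (fun s => clamped delta phi (s - h) * clamped delta phi s * exp (p * s)) 0 h) as [X _];
    [lra | intros s Hs; rewrite !clamped_eq; auto; lra | intros; auto with cont |].
  replace 0 with (RInt (fun _ => 0) 0 h) at 2 by (rewrite RInt_const; apply Rmult_0_r).
  apply RInt_le; auto; [lra | apply ex_RInt_const |].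
  intros x Hx. pose proof (phi_neg (x - h) ltac:(lra)). pose proof (phi_pos x ltac:(lra)).
  pose proof (exp_pos (p * x)). assert (phi (x - h) * phi x < 0) by nra. nra.
Qed.

Lemma phi_h_pos : 0 < phi h.
Proof. apply phi_pos; lra. Qed.

Lemma phi_mh_neg : phi (- h) < 0.
Proof. apply phi_neg; lra. Qed.

Lemma Aphi_nonneg : 0 <= Aphi p phi h.
Proof.
  unfold Aphi. fold cell_LR cell_LL.
  pose proof phi_h_pos. pose proof phi_mh_neg. pose proof cell_LL_pos. pose proof cell_LR_nonpos.
  replace (phi h / phi (- h) * (cell_LR / cell_LL))
    with ((phi h / - phi (- h)) * (- cell_LR / cell_LL)) by (field; lra).
  apply Rmult_le_pos; apply Rdiv_le_0_compat; lra.
Qed.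

Lemma Bphi_nonneg : 0 <= Bphi p phi h.
Proof.
  unfold Bphi. fold cell_LR cell_RR.
  pose proof phi_h_pos. pose proof phi_mh_neg. pose proof cell_RR_pos. pose proof cell_LR_nonpos.
  replace (phi (- h) / phi h * (cell_LR / cell_RR))
    with ((- phi (- h) / phi h) * (- cell_LR / cell_RR)) by (field; lra).
  apply Rmult_le_pos; apply Rdiv_le_0_compat; lra.
Qed.

(* Gram data of the two normalized hat pieces on the cell (without the factor e^{p a}
   coming from the position a of the cell): diagonal entries, off-diagonal entry, moments. *)
Definition cell_gram_rise : R := cell_LL / (phi h * phi h).
Definition cell_gram_fall : R := cell_RR / (phi (- h) * phi (- h)).
Definition cell_gram_cross : R := cell_LR / (phi (- h) * phi h).
Definition cell_moment_rise : R := cell_L / phi h.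
Definition cell_moment_fall : R := cell_R / phi (- h).

Lemma cell_gram_rise_pos : 0 < cell_gram_rise.
Proof.
  pose proof phi_h_pos. pose proof cell_LL_pos. apply Rdiv_lt_0_compat; nra.
Qed.

Lemma cell_gram_fall_pos : 0 < cell_gram_fall.
Proof.
  pose proof phi_mh_neg. pose proof cell_RR_pos. apply Rdiv_lt_0_compat; nra.
Qed.

Lemma Aphi_ratio : Aphi p phi h * cell_gram_rise = cell_gram_cross.
Proof.
  unfold Aphi, cell_gram_rise, cell_gram_cross. fold cell_LR cell_LL.
  pose proof phi_h_pos. pose proof phi_mh_neg. pose proof cell_LL_pos. field; lra.
Qed.

Lemma Bphi_ratio : Bphi p phi h * cell_gram_fall = cell_gram_cross.
Proof.
  unfold Bphi, cell_gram_fall, cell_gram_cross. fold cell_LR cell_RR.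
  pose proof phi_h_pos. pose proof phi_mh_neg. pose proof cell_RR_pos. field; lra.
Qed.

Lemma Cphi_ratio : Cphi p phi h * cell_gram_rise = cell_moment_rise.
Proof.
  unfold Cphi, cell_gram_rise, cell_moment_rise. fold cell_L cell_LL.
  pose proof phi_h_pos. pose proof cell_LL_pos. field; lra.
Qed.

Lemma Dphi_ratio : Dphi p phi h * cell_gram_fall = cell_moment_fall.
Proof.
  unfold Dphi, cell_gram_fall, cell_moment_fall. fold cell_R cell_RR.
  pose proof phi_mh_neg. pose proof cell_RR_pos. field; lra.
Qed.
End Cell.

Section Hats.
Variables (delta : R) (n : nat) (p : R) (phi : nat -> R -> R) (tt : nat -> R).
Hypothesis Hdelta : 0 < delta.
Hypothesis Hn : (2 <= n)%nat.
Hypothesis Hphi_cont : forall j, (1 <= j <= n - 1)%nat -> cont_on (- delta) delta (phi j).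
Hypothesis Hphi_incr : forall j, (1 <= j <= n - 1)%nat ->
  forall x y, - delta <= x <= delta -> - delta <= y <= delta -> x < y -> phi j x < phi j y.
Hypothesis Hphi0 : forall j, (1 <= j <= n - 1)%nat -> phi j 0 = 0.
Hypothesis Ht : forall j, (1 <= j <= n - 1)%nat -> tt j < tt (S j).
Hypothesis Hh : forall j, (1 <= j <= n - 1)%nat -> tt (S j) - tt j <= delta.

Notation HH := (hat n phi tt).

Definition h (k : nat) : R := tt (S k) - tt k.

Lemma h_bounds k : (1 <= k <= n - 1)%nat -> 0 < h k <= delta.
Proof. intros Hk. unfold h. pose proof (Ht k Hk). pose proof (Hh k Hk). lra. Qed.

Ltac cell_hyp := first [exact Hdelta | apply h_bounds | apply Hphi_cont | apply Hphi_incr | apply Hphi0]; lia.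

(* The two hat pieces on cell k, continuous on all of R: H_(k+1) rises, H_k falls. *)
Definition rise (k : nat) (t : R) : R := clamped delta (phi k) (t - tt k) / phi k (h k).
Definition fall (k : nat) (t : R) : R := clamped delta (phi k) (t - tt (S k)) / phi k (- h k).
Definition cell_hat (k j : nat) (t : R) : R :=
  if Nat.eqb j k then fall k t else if Nat.eqb j (S k) then rise k t else 0.

Lemma cell_hat_continuous k j x : (1 <= k <= n - 1)%nat -> continuous (cell_hat k j) x.
Proof.
  intros Hk. pose proof (clamped_continuous delta (phi k) Hdelta (Hphi_cont k Hk)) as Hc.
  unfold cell_hat, rise, fall. destruct (Nat.eqb j k); [|destruct (Nat.eqb j (S k))]; auto with cont.
Qed.

Lemma rise_eq k t : (1 <= k <= n - 1)%nat -> tt k <= t <= tt (S k) ->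
  rise k t = phi k (t - tt k) / phi k (tt (S k) - tt k).
Proof.
  intros Hk Htk. pose proof (h_bounds k Hk). unfold rise, h in *. rewrite clamped_eq; auto. lra.
Qed.

Lemma fall_eq k t : (1 <= k <= n - 1)%nat -> tt k <= t <= tt (S k) ->
  fall k t = phi k (t - tt (S k)) / phi k (tt k - tt (S k)).
Proof.
  intros Hk Htk. pose proof (h_bounds k Hk). unfold fall, h in *.
  rewrite clamped_eq by lra. do 2 f_equal. ring.
Qed.

(* phi k vanishes only at 0, so phi k x / phi k x = 1 for x <> 0. *)
Lemma phi_ratio_one k x : (1 <= k <= n - 1)%nat -> - delta <= x <= delta -> x <> 0 ->
  phi k x / phi k x = 1.
Proof.
  intros Hk Hx Hx0. apply Rdiv_diag.
  destruct (Rlt_dec x 0).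
  - apply Rlt_not_eq, (phi_neg delta); first [cell_hyp | lra].
  - apply Rgt_not_eq, (phi_pos delta); first [cell_hyp | lra].
Qed.

Lemma hat_on_cell_fall k t : (1 <= k <= n - 1)%nat -> tt k <= t <= tt (S k) -> HH k t = fall k t.
Proof.
  intros Hk Htk. rewrite fall_eq by auto. unfold hat.
  destruct (Nat.eqb_spec k 1) as [->|Hk1].
  - do 2 (destruct Rle_dec; [|lra]). reflexivity.
  - rewrite (proj2 (Nat.eqb_neq k n)) by lia.
    pose proof (nodes_lt n tt Ht (k - 1) k ltac:(lia) ltac:(lia)).
    destruct Rle_dec; [|lra]. replace (k + 1)%nat with (S k) by lia.
    destruct (Rle_dec t (tt k)); [|destruct Rle_dec; [reflexivity | lra]].
    replace t with (tt k) by lra. pose proof (h_bounds k Hk). pose proof (h_bounds (k - 1) ltac:(lia)).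
    unfold h in *. replace (S (k - 1)) with k in * by lia.
    rewrite (phi_ratio_one (k - 1)), (phi_ratio_one k); (lia || lra).
Qed.

Lemma hat_on_cell_rise k t : (1 <= k <= n - 1)%nat -> tt k <= t <= tt (S k) -> HH (S k) t = rise k t.
Proof.
  intros Hk Htk. rewrite rise_eq by auto. unfold hat.
  destruct (Nat.eqb_spec (S k) 1); [lia|].
  destruct (Nat.eqb_spec (S k) n) as [<-|]; replace (S k - 1)%nat with k by lia;
    do 2 (destruct Rle_dec; [|lra]); reflexivity.
Qed.

(* Away from its two cells a hat vanishes; at a shared node it vanishes because phi 0 = 0. *)
Lemma hat_off_cell k j t : (1 <= k <= n - 1)%nat -> (1 <= j <= n)%nat -> j <> k -> j <> S k ->
  tt k <= t <= tt (S k) -> HH j t = 0.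
Proof.
  intros Hk Hj Hjk HjSk Htk. unfold hat.
  assert (Zero : forall i x y, (1 <= i <= n - 1)%nat -> x = 0 -> phi i x / y = 0)
    by (intros i x y Hi ->; rewrite Hphi0 by auto; apply Rmult_0_l).
  pose proof (nodes_le n tt Ht) as Hle.
  destruct (Nat.eqb_spec j 1) as [->|].
  - assert (tt 2%nat <= tt k) by (apply Hle; lia).
    repeat destruct Rle_dec; auto; apply Zero; lra || lia.
  - destruct (Nat.eqb_spec j n) as [->|].
    + assert (tt (S k) <= tt (n - 1)%nat) by (apply Hle; lia).
      repeat destruct Rle_dec; auto; apply Zero; lra || lia.
    + destruct (Nat.lt_ge_cases j k).
      * assert (tt (j + 1)%nat <= tt k) by (apply Hle; lia).
        assert (tt j < tt (j + 1)%nat) by (apply (nodes_lt n tt Ht); lia).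
        repeat destruct Rle_dec; auto; try lra; apply Zero; lra || lia.
      * assert (tt (S k) <= tt (j - 1)%nat) by (apply Hle; lia).
        assert (tt (j - 1)%nat < tt j) by (apply (nodes_lt n tt Ht); lia).
        repeat destruct Rle_dec; auto; try lra; apply Zero; lra || lia.
Qed.

Lemma hat_on_cell k j t : (1 <= k <= n - 1)%nat -> (1 <= j <= n)%nat -> tt k <= t <= tt (S k) ->
  HH j t = cell_hat k j t.
Proof.
  intros Hk Hj Htk. unfold cell_hat.
  destruct (Nat.eqb_spec j k) as [->|]; [apply hat_on_cell_fall; auto|].
  destruct (Nat.eqb_spec j (S k)) as [->|]; [apply hat_on_cell_rise; auto|].
  apply (hat_off_cell k); auto.
Qed.

Lemma hat_bounds j t : (1 <= j <= n)%nat -> tt 1%nat <= t <= tt n -> 0 <= HH j t <= 1.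
Proof.
  intros Hj Htn. destruct (point_in_cell n tt n t ltac:(lia) Htn) as [k [Hk Htk]].
  rewrite (hat_on_cell k) by auto. unfold cell_hat.
  pose proof (h_bounds k Hk). unfold h in *.
  assert (Mono : forall x y, - delta <= x <= delta -> - delta <= y <= delta -> x <= y -> phi k x <= phi k y)
    by (apply (phi_mono delta); cell_hyp).
  assert (Pos : forall x, 0 < x <= delta -> 0 < phi k x) by (apply (phi_pos delta); cell_hyp).
  assert (Neg : forall x, - delta <= x < 0 -> phi k x < 0) by (apply (phi_neg delta); cell_hyp).
  assert (Z : phi k 0 = 0) by cell_hyp.
  destruct (Nat.eqb j k); [|destruct (Nat.eqb j (S k))]; [| |lra].
  - rewrite fall_eq by auto.
    assert (Hd : 0 < - phi k (tt k - tt (S k))) by (pose proof (Neg (tt k - tt (S k))); lra).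
    assert (phi k (tt k - tt (S k)) <= phi k (t - tt (S k)) <= 0) by (rewrite <- Z; split; apply Mono; lra).
    replace (_ / _) with (- phi k (t - tt (S k)) / - phi k (tt k - tt (S k))) by (field; lra).
    split; [apply Rdiv_le_0_compat; lra | apply (proj1 (Rdiv_le_1 _ _ Hd)); lra].
  - rewrite rise_eq by auto.
    assert (Hd : 0 < phi k (tt (S k) - tt k)) by (apply Pos; lra).
    assert (0 <= phi k (t - tt k) <= phi k (tt (S k) - tt k)) by (rewrite <- Z; split; apply Mono; lra).
    split; [apply Rdiv_le_0_compat; lra | apply (proj1 (Rdiv_le_1 _ _ Hd)); lra].
Qed.

Lemma cellwise_hat j : (1 <= j <= n)%nat -> cellwise_continuous n tt (HH j).
Proof.
  intros Hj k Hk. exists (cell_hat k j). split.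
  - intros; apply cell_hat_continuous; auto.
  - intros; apply hat_on_cell; auto.
Qed.

Lemma phi_h_signs k : (1 <= k <= n - 1)%nat -> 0 < phi k (h k) /\ phi k (- h k) < 0.
Proof. intros Hk. split; [apply (phi_h_pos delta) | apply (phi_mh_neg delta)]; cell_hyp. Qed.

Lemma RInt_cell k F K G Gu : (1 <= k <= n - 1)%nat -> (forall x, continuous G x) ->
  (forall t, tt k < t < tt (S k) -> F t = K * G (t - tt k) * exp (p * t)) ->
  (forall s, 0 < s < h k -> G s * exp (p * s) = Gu s) ->
  RInt F (tt k) (tt (S k)) = K * exp (p * tt k) * RInt Gu 0 (h k).
Proof.
  intros Hk HG HF HGu. pose proof (h_bounds k Hk). unfold h in *.
  rewrite (RInt_ext F (fun t => K * G (t - tt k) * exp (p * t))).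
  2:{ intros x Hx. rewrite Rmin_left, Rmax_right in Hx by lra. auto. }
  replace (tt (S k)) with (tt k + (tt (S k) - tt k)) at 1 by ring.
  rewrite RInt_shift_weight by auto. f_equal. apply RInt_ext. intros x Hx.
  rewrite Rmin_left, Rmax_right in Hx by lra. auto.
Qed.

Section CellIntegrals.
Variable k : nat.
Hypothesis Hk : (1 <= k <= n - 1)%nat.
Let ext := clamped delta (phi k).
Let Hext : forall x, continuous ext x := clamped_continuous delta (phi k) Hdelta (Hphi_cont k Hk).
Let ext_eq x : - delta <= x <= delta -> ext x = phi k x := clamped_eq delta (phi k) x.

Lemma hats_on_cell_local t : tt k < t < tt (S k) ->
  HH k t = ext (t - tt k - h k) / phi k (- h k) /\ HH (S k) t = ext (t - tt k) / phi k (h k).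
Proof.
  intros Htk. rewrite hat_on_cell_fall, hat_on_cell_rise by (auto; lra).
  unfold fall, rise, h. replace (t - tt k - (tt (S k) - tt k)) with (t - tt (S k)) by ring. auto.
Qed.

Lemma cell_cross_eq : (RInt (fun t => HH k t * HH (S k) t * exp (p * t)) (tt k) (tt (S k)) : R) =
  exp (p * tt k) * cell_gram_cross p (phi k) (h k).
Proof.
  destruct (phi_h_signs k Hk). pose proof (h_bounds k Hk).
  rewrite (RInt_cell k _ (/ (phi k (- h k) * phi k (h k))) (fun s => ext (s - h k) * ext s)
             (fun s => phi k (s - h k) * phi k s * exp (p * s))); auto with cont.
  - unfold cell_gram_cross, cell_LR. field. lra.
  - intros t Htk. destruct (hats_on_cell_local t Htk) as [-> ->]. field. lra.
  - intros s Hs. rewrite !ext_eq by lra. reflexivity.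
Qed.

Lemma cell_rise_eq : (RInt (fun t => HH (S k) t * HH (S k) t * exp (p * t)) (tt k) (tt (S k)) : R) =
  exp (p * tt k) * cell_gram_rise p (phi k) (h k).
Proof.
  destruct (phi_h_signs k Hk). pose proof (h_bounds k Hk).
  rewrite (RInt_cell k _ (/ (phi k (h k) * phi k (h k))) (fun s => ext s * ext s)
             (fun s => phi k s ^ 2 * exp (p * s))); auto with cont.
  - unfold cell_gram_rise, cell_LL. field. lra.
  - intros t Htk. destruct (hats_on_cell_local t Htk) as [_ ->]. field. lra.
  - intros s Hs. rewrite !ext_eq by lra. ring.
Qed.

Lemma cell_fall_eq : (RInt (fun t => HH k t * HH k t * exp (p * t)) (tt k) (tt (S k)) : R) =
  exp (p * tt k) * cell_gram_fall p (phi k) (h k).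
Proof.
  destruct (phi_h_signs k Hk). pose proof (h_bounds k Hk).
  rewrite (RInt_cell k _ (/ (phi k (- h k) * phi k (- h k))) (fun s => ext (s - h k) * ext (s - h k))
             (fun s => phi k (s - h k) ^ 2 * exp (p * s))); auto with cont.
  - unfold cell_gram_fall, cell_RR. field. lra.
  - intros t Htk. destruct (hats_on_cell_local t Htk) as [-> _]. field. lra.
  - intros s Hs. rewrite !ext_eq by lra. ring.
Qed.

Lemma cell_moment_rise_eq : (RInt (fun t => HH (S k) t * exp (p * t)) (tt k) (tt (S k)) : R) =
  exp (p * tt k) * cell_moment_rise p (phi k) (h k).
Proof.
  destruct (phi_h_signs k Hk). pose proof (h_bounds k Hk).
  rewrite (RInt_cell k _ (/ phi k (h k)) ext (fun s => phi k s * exp (p * s))); auto.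
  - unfold cell_moment_rise, cell_L. field. lra.
  - intros t Htk. destruct (hats_on_cell_local t Htk) as [_ ->]. field. lra.
  - intros s Hs. rewrite ext_eq by lra. reflexivity.
Qed.

Lemma cell_moment_fall_eq : (RInt (fun t => HH k t * exp (p * t)) (tt k) (tt (S k)) : R) =
  exp (p * tt k) * cell_moment_fall p (phi k) (h k).
Proof.
  destruct (phi_h_signs k Hk). pose proof (h_bounds k Hk).
  rewrite (RInt_cell k _ (/ phi k (- h k)) (fun s => ext (s - h k)) (fun s => phi k (s - h k) * exp (p * s)));
    auto with cont.
  - unfold cell_moment_fall, cell_R. field. lra.
  - intros t Htk. destruct (hats_on_cell_local t Htk) as [-> _]. field. lra.
  - intros s Hs. rewrite ext_eq by lra. reflexivity.
Qed.
End CellIntegrals.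

Definition gram (i j : nat) : R := ip p (tt 1%nat) (tt n) (HH i) (HH j).
Definition moment (j : nat) : R := RInt (fun t => HH j t * exp (p * t)) (tt 1%nat) (tt n).

Lemma cellwise_gram_integrand i j : (1 <= i <= n)%nat -> (1 <= j <= n)%nat ->
  cellwise_continuous n tt (fun t => HH i t * HH j t * exp (p * t)).
Proof.
  intros. apply cellwise_mult; [apply cellwise_mult|apply cellwise_weight]; apply cellwise_hat; auto.
Qed.

Lemma gram_sym i j : gram i j = gram j i.
Proof. unfold gram, ip. apply RInt_ext. intros x _. rewrite (Rmult_comm (HH i x)). reflexivity. Qed.

Lemma gram_far i j : (1 <= i <= n)%nat -> (1 <= j <= n)%nat -> (S i < j)%nat -> gram i j = 0.
Proof.
  intros Hi Hj Hij. unfold gram, ip. apply (RInt_cells_zero n tt Ht); try lia.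
  intros k Hk t Htk. assert (Hk' : (1 <= k <= n - 1)%nat) by lia.
  destruct (Nat.eq_dec i k); destruct (Nat.eq_dec i (S k)); try lia;
    [rewrite (hat_off_cell k j t) | rewrite (hat_off_cell k j t) | rewrite (hat_off_cell k i t)];
    auto; try lia; try lra; ring.
Qed.

Lemma gram_next k : (1 <= k <= n - 1)%nat -> gram k (S k) = exp (p * tt k) * cell_gram_cross p (phi k) (h k).
Proof.
  intros Hk. unfold gram, ip.
  assert (Hout : forall k', (1 <= k' <= n - 1)%nat -> k' <> (k - 1)%nat -> k' <> k ->
            forall t, tt k' < t < tt (S k') -> HH k t * HH (S k) t * exp (p * t) = 0).
  { intros k' Hk' H1 H2 t Htk. destruct (Nat.eq_dec k' (S k)).
    - rewrite (hat_off_cell k' k t); try lia; try lra; ring.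
    - rewrite (hat_off_cell k' (S k) t); try lia; try lra; ring. }
  rewrite (RInt_two_cells n tt Ht _ k Hn (cellwise_gram_integrand k (S k) ltac:(lia) ltac:(lia))
             ltac:(lia) Hout).
  rewrite (proj2 (Nat.eqb_neq k n)), cell_cross_eq by lia.
  destruct (Nat.eqb_spec k 1); [lra|].
  rewrite (RInt_cells_zero n tt Ht _ (k - 1) k); try lia; [lra|].
  intros k' Hk' t Htk. replace k' with (k - 1)%nat in * by lia.
  rewrite (hat_off_cell (k - 1) (S k) t); try lia; try lra; ring.
Qed.

Lemma gram_diag j : (1 <= j <= n)%nat -> gram j j =
  (if Nat.eqb j 1 then 0 else exp (p * tt (j - 1)%nat) * cell_gram_rise p (phi (j - 1)%nat) (h (j - 1)%nat)) +
  (if Nat.eqb j n then 0 else exp (p * tt j) * cell_gram_fall p (phi j) (h j)).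
Proof.
  intros Hj. unfold gram, ip.
  assert (Hout : forall k', (1 <= k' <= n - 1)%nat -> k' <> (j - 1)%nat -> k' <> j ->
            forall t, tt k' < t < tt (S k') -> HH j t * HH j t * exp (p * t) = 0)
    by (intros k' Hk' H1 H2 t Htk; rewrite (hat_off_cell k' j t); try lia; try lra; ring).
  rewrite (RInt_two_cells n tt Ht _ j Hn (cellwise_gram_integrand j j Hj Hj) Hj Hout).
  destruct (Nat.eqb_spec j 1); destruct (Nat.eqb_spec j n); try lia; f_equal;
    rewrite <- ?cell_rise_eq, <- ?cell_fall_eq by lia; replace (S (j - 1)) with j by lia; reflexivity.
Qed.

Lemma moment_eq j : (1 <= j <= n)%nat -> moment j =
  (if Nat.eqb j 1 then 0 else exp (p * tt (j - 1)%nat) * cell_moment_rise p (phi (j - 1)%nat) (h (j - 1)%nat)) +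
  (if Nat.eqb j n then 0 else exp (p * tt j) * cell_moment_fall p (phi j) (h j)).
Proof.
  intros Hj. unfold moment.
  assert (Hout : forall k', (1 <= k' <= n - 1)%nat -> k' <> (j - 1)%nat -> k' <> j ->
            forall t, tt k' < t < tt (S k') -> HH j t * exp (p * t) = 0)
    by (intros k' Hk' H1 H2 t Htk; rewrite (hat_off_cell k' j t); try lia; try lra; ring).
  rewrite (RInt_two_cells n tt Ht _ j Hn
             (cellwise_mult n tt _ _ (cellwise_hat j Hj) (cellwise_weight n tt p)) Hj Hout).
  destruct (Nat.eqb_spec j 1); destruct (Nat.eqb_spec j n); try lia; f_equal;
    rewrite <- ?cell_moment_rise_eq, <- ?cell_moment_fall_eq by lia;
    replace (S (j - 1)) with j by lia; reflexivity.
Qed.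

Variable c : R.
Hypothesis Hc : 0 < c < 1.
Hypothesis HAB : max1n (n - 1) (fun j => Rmax (Aphi p (phi j) (tt (S j) - tt j))
                                            (Bphi p (phi j) (tt (S j) - tt j))) <= c.

Lemma cell_cross_dominated k : (1 <= k <= n - 1)%nat ->
  0 <= cell_gram_cross p (phi k) (h k) /\
  cell_gram_cross p (phi k) (h k) <= c * cell_gram_rise p (phi k) (h k) /\
  cell_gram_cross p (phi k) (h k) <= c * cell_gram_fall p (phi k) (h k).
Proof.
  intros Hk.
  pose proof (max1n_ge (n - 1) (fun j => Rmax (Aphi p (phi j) (tt (S j) - tt j))
                (Bphi p (phi j) (tt (S j) - tt j))) k Hk) as M. simpl in M. fold (h k) in M.
  pose proof (Rmax_l (Aphi p (phi k) (h k)) (Bphi p (phi k) (h k))).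
  pose proof (Rmax_r (Aphi p (phi k) (h k)) (Bphi p (phi k) (h k))).
  assert (0 <= Aphi p (phi k) (h k)) by (apply (Aphi_nonneg p delta); cell_hyp).
  assert (0 <= Bphi p (phi k) (h k)) by (apply (Bphi_nonneg p delta); cell_hyp).
  assert (0 < cell_gram_rise p (phi k) (h k)) by (apply (cell_gram_rise_pos p delta); cell_hyp).
  assert (0 < cell_gram_fall p (phi k) (h k)) by (apply (cell_gram_fall_pos p delta); cell_hyp).
  assert (EA : Aphi p (phi k) (h k) * cell_gram_rise p (phi k) (h k) = cell_gram_cross p (phi k) (h k))
    by (apply (Aphi_ratio p delta); cell_hyp).
  assert (EB : Bphi p (phi k) (h k) * cell_gram_fall p (phi k) (h k) = cell_gram_cross p (phi k) (h k))
    by (apply (Bphi_ratio p delta); cell_hyp).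
  split; [|split]; [rewrite <- EA | rewrite <- EA | rewrite <- EB]; nra.
Qed.

Lemma gram_row_dominant : row_diag_dom n gram c.
Proof.
  intros j Hj. rewrite (gram_diag j Hj). replace (j + 1)%nat with (S j) by lia.
  assert (Left : (1 < j)%nat -> Rabs (gram (j - 1) j) <=
            c * (exp (p * tt (j - 1)%nat) * cell_gram_rise p (phi (j - 1)%nat) (h (j - 1)%nat))).
  { intros. replace j with (S (j - 1)) at 2 by lia. rewrite gram_next by lia.
    destruct (cell_cross_dominated (j - 1) ltac:(lia)) as [H0 [H1 _]]. pose proof (exp_pos (p * tt (j - 1)%nat)).
    rewrite Rabs_right by nra. nra. }
  assert (Right : j <> n -> Rabs (gram j (S j)) <= c * (exp (p * tt j) * cell_gram_fall p (phi j) (h j))).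
  { intros. rewrite gram_next by lia.
    destruct (cell_cross_dominated j ltac:(lia)) as [H0 [_ H2]]. pose proof (exp_pos (p * tt j)).
    rewrite Rabs_right by nra. nra. }
  assert (Pos : forall k, (1 <= k <= n - 1)%nat -> 0 < exp (p * tt k) * cell_gram_rise p (phi k) (h k) /\
                  0 < exp (p * tt k) * cell_gram_fall p (phi k) (h k)).
  { intros k Hk. pose proof (exp_pos (p * tt k)).
    split; apply Rmult_lt_0_compat; auto;
      [apply (cell_gram_rise_pos p delta) | apply (cell_gram_fall_pos p delta)]; cell_hyp. }
  destruct (Nat.eqb_spec j 1); destruct (Nat.eqb_spec j n); try lia.
  - destruct (Pos j ltac:(lia)). specialize (Right ltac:(lia)). rewrite (Rabs_right (_ + _)); lra.
  - destruct (Pos (j - 1)%nat ltac:(lia)). specialize (Left ltac:(lia)). rewrite (Rabs_right (_ + _)); lra.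
  - destruct (Pos j ltac:(lia)). destruct (Pos (j - 1)%nat ltac:(lia)).
    specialize (Left ltac:(lia)). specialize (Right ltac:(lia)). rewrite (Rabs_right (_ + _)); lra.
Qed.

Definition gram_d (j : nat) : R := gram j j.
Definition gram_e (k : nat) : R := gram k (S k).

Lemma gram_tri_dominant : tri_dominant n gram_d gram_e c.
Proof.
  intros j Hj. pose proof (gram_row_dominant j Hj) as D. unfold gram_d, gram_e.
  replace (j + 1)%nat with (S j) in D by lia.
  assert (Hpos : 0 < gram j j).
  { rewrite gram_diag by auto.
    assert (CellPos : forall k, (1 <= k <= n - 1)%nat ->
              0 < exp (p * tt k) * cell_gram_rise p (phi k) (h k) /\
              0 < exp (p * tt k) * cell_gram_fall p (phi k) (h k)).
    { intros k Hk. pose proof (exp_pos (p * tt k)).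
      split; apply Rmult_lt_0_compat; auto;
        [apply (cell_gram_rise_pos p delta) | apply (cell_gram_fall_pos p delta)]; cell_hyp. }
    destruct (Nat.eqb_spec j 1); destruct (Nat.eqb_spec j n); try lia.
    - destruct (CellPos j); lia || lra.
    - destruct (CellPos (j - 1)%nat); lia || lra.
    - destruct (CellPos j); destruct (CellPos (j - 1)%nat); lia || lra. }
  split; [exact Hpos|]. rewrite (Rabs_right (gram j j)) in D by lra.
  destruct (Nat.eqb j 1); [exact D|]. replace (S (j - 1)) with j by lia. exact D.
Qed.

Lemma gram_action a i : (1 <= i <= n)%nat ->
  sum1n n (fun j => a j * gram j i) = trirow n gram_d gram_e a i.
Proof.
  intros Hi. rewrite (sum1n_three n i); auto.
  - unfold trirow, gram_d, gram_e.
    destruct (Nat.eqb_spec i 1); destruct (Nat.eqb_spec i n);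
      try replace (S (i - 1)) with i by lia; try rewrite (gram_sym (S i) i); ring.
  - intros j Hj H1 H2 H3. destruct (Nat.le_gt_cases j i).
    + rewrite gram_far by lia. ring.
    + rewrite gram_sym, gram_far by lia. ring.
Qed.

Definition rhs (f : R -> R) (i : nat) : R := ip p (tt 1%nat) (tt n) f (HH i).

Lemma residual_eq f a i : cont_on (tt 1%nat) (tt n) f -> (1 <= i <= n)%nat ->
  ip p (tt 1%nat) (tt n) (fun t => f t - sum1n n (fun j => a j * HH j t)) (HH i) =
  rhs f i - trirow n gram_d gram_e a i.
Proof.
  intros Hf Hi. rewrite <- gram_action by auto. unfold ip, rhs, gram.
  pose proof (fun j (Hj : (1 <= j <= n)%nat) => cellwise_ex_RInt n tt Ht _ 1 n
                (cellwise_gram_integrand j i Hj Hi) ltac:(lia) ltac:(lia)) as Xg.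
  destruct (RInt_sum1n n (fun j t => a j * (HH j t * HH i t * exp (p * t))) (tt 1%nat) (tt n))
    as [Xs Es]; [intros j Hj; exact (ex_RInt_scal _ _ _ (a j) (Xg j Hj))|].
  assert (Xf : ex_RInt (fun t => f t * HH i t * exp (p * t)) (tt 1%nat) (tt n)).
  { apply (cellwise_ex_RInt n tt Ht); try lia.
    apply cellwise_mult; [apply cellwise_mult; [apply cellwise_cont_on | apply cellwise_hat] |
      apply cellwise_weight]; auto. }
  rewrite (sum1n_ext n _ (fun j => RInt (fun t => a j * (HH j t * HH i t * exp (p * t))) (tt 1%nat) (tt n)))
    by (intros j Hj; symmetry; exact (RInt_scal _ _ _ (a j) (Xg j Hj))).
  rewrite <- Es. etransitivity; [|exact (RInt_minus _ _ _ _ Xf Xs)].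
  apply RInt_ext. intros x _.
  assert (E : (f x - sum1n n (fun j => a j * HH j x)) * HH i x * exp (p * x) =
              f x * HH i x * exp (p * x) - sum1n n (fun j => a j * (HH j x * HH i x * exp (p * x)))).
  { rewrite !Rmult_minus_distr_r, !sum1n_mult_r. f_equal. apply sum1n_ext. intros; ring. }
  exact E.
Qed.

(* The normal equations are solvable, so the orthogonal projection is well defined. *)
Lemma orth_proj_spec f : cont_on (tt 1%nat) (tt n) f ->
  is_orth_proj p (tt 1%nat) (tt n) n HH f (orth_proj p (tt 1%nat) (tt n) n HH f).
Proof.
  intros Hf. unfold orth_proj. apply epsilon_spec.
  destruct (tri_solve n gram_d gram_e (rhs f) c ltac:(lia) ltac:(lra) gram_tri_dominant) as [a Ha].
  exists (fun t => sum1n n (fun j => a j * HH j t)). split; [exists a; reflexivity|].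
  intros i Hi. rewrite residual_eq, Ha by auto. ring.
Qed.

Definition CD_max : R :=
  max1n (n - 1) (fun j => Rmax (Cphi p (phi j) (tt (S j) - tt j)) (Dphi p (phi j) (tt (S j) - tt j))).

Lemma moment_le j : (1 <= j <= n)%nat -> moment j <= CD_max * gram j j.
Proof.
  intros Hj. rewrite moment_eq, gram_diag by auto.
  assert (Cell : forall k, (1 <= k <= n - 1)%nat ->
     exp (p * tt k) * cell_moment_rise p (phi k) (h k) <=
       CD_max * (exp (p * tt k) * cell_gram_rise p (phi k) (h k)) /\
     exp (p * tt k) * cell_moment_fall p (phi k) (h k) <=
       CD_max * (exp (p * tt k) * cell_gram_fall p (phi k) (h k))).
  { intros k Hk.
    pose proof (max1n_ge (n - 1) (fun j => Rmax (Cphi p (phi j) (tt (S j) - tt j))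
                  (Dphi p (phi j) (tt (S j) - tt j))) k Hk) as M. simpl in M. fold (h k) CD_max in M.
    pose proof (Rmax_l (Cphi p (phi k) (h k)) (Dphi p (phi k) (h k))).
    pose proof (Rmax_r (Cphi p (phi k) (h k)) (Dphi p (phi k) (h k))).
    assert (0 < cell_gram_rise p (phi k) (h k)) by (apply (cell_gram_rise_pos p delta); cell_hyp).
    assert (0 < cell_gram_fall p (phi k) (h k)) by (apply (cell_gram_fall_pos p delta); cell_hyp).
    rewrite <- (Cphi_ratio p delta), <- (Dphi_ratio p delta) by cell_hyp.
    pose proof (exp_pos (p * tt k)).
    split; rewrite Rmult_comm, Rmult_assoc, (Rmult_comm _ (exp _));
      apply Rmult_le_compat_r; try lra; apply Rmult_le_pos; lra. }
  destruct (Nat.eqb_spec j 1); destruct (Nat.eqb_spec j n); try lia.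
  - destruct (Cell j); lia || lra.
  - destruct (Cell (j - 1)%nat); lia || lra.
  - destruct (Cell j); destruct (Cell (j - 1)%nat); lia || lra.
Qed.

(* Since the hats are nonnegative, |<f, H_j>_p| <= ||f||_oo * moment j. *)
Lemma rhs_bound f j : cont_on (tt 1%nat) (tt n) f -> (1 <= j <= n)%nat ->
  Rabs (rhs f j) <= supnorm (tt 1%nat) (tt n) f * moment j.
Proof.
  intros Hf Hj. set (N := supnorm (tt 1%nat) (tt n) f).
  assert (H1n : tt 1%nat <= tt n) by (apply (nodes_le n tt Ht); lia).
  assert (Xm : ex_RInt (fun t => HH j t * exp (p * t)) (tt 1%nat) (tt n)).
  { apply (cellwise_ex_RInt n tt Ht); try lia.
    apply cellwise_mult; [apply cellwise_hat | apply cellwise_weight]; auto. }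
  assert (Xf : ex_RInt (fun t => f t * HH j t * exp (p * t)) (tt 1%nat) (tt n)).
  { apply (cellwise_ex_RInt n tt Ht); try lia.
    apply cellwise_mult; [apply cellwise_mult; [apply cellwise_cont_on | apply cellwise_hat] |
      apply cellwise_weight]; auto. }
  assert (Pointwise : forall t, tt 1%nat < t < tt n ->
     - N * (HH j t * exp (p * t)) <= f t * HH j t * exp (p * t) <= N * (HH j t * exp (p * t))).
  { intros t Htn. assert (Hft : Rabs (f t) <= N)
      by (apply supnorm_ge; [apply cont_on_bounded | lra]; auto).
    destruct (hat_bounds j t Hj ltac:(lra)). pose proof (exp_pos (p * t)).
    apply Rabs_le_between in Hft. assert (0 <= HH j t * exp (p * t)) by nra. split; nra. }
  unfold rhs, moment, ip. apply Rabs_le. split.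
  - apply Rle_trans with (RInt (fun t => - N * (HH j t * exp (p * t))) (tt 1%nat) (tt n)).
    + right. transitivity (- N * RInt (fun t => HH j t * exp (p * t)) (tt 1%nat) (tt n)); [ring|].
      symmetry. exact (RInt_scal _ _ _ (- N) Xm).
    + apply RInt_le; auto; [exact (ex_RInt_scal _ _ _ _ Xm) | intros; apply Pointwise; auto].
  - apply Rle_trans with (RInt (fun t => N * (HH j t * exp (p * t))) (tt 1%nat) (tt n)).
    + apply RInt_le; auto; [exact (ex_RInt_scal _ _ _ _ Xm) | intros; apply Pointwise; auto].
    + right. exact (RInt_scal _ _ _ N Xm).
Qed.

Lemma proj_coef_bound f a : cont_on (tt 1%nat) (tt n) f ->
  (forall i, (1 <= i <= n)%nat -> trirow n gram_d gram_e a i = rhs f i) ->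
  forall k, (1 <= k <= n)%nat -> Rabs (a k) <= supnorm (tt 1%nat) (tt n) f * CD_max / (1 - c).
Proof.
  intros Hf Ha. apply (tri_bound n gram_d gram_e a (rhs f)); auto; [lia | lra | apply gram_tri_dominant |].
  intros i Hi. eapply Rle_trans; [apply rhs_bound; auto|]. rewrite Rmult_assoc.
  apply Rmult_le_compat_l; [|apply moment_le; auto].
  apply supnorm_nonneg; [apply (nodes_le n tt Ht); lia | apply cont_on_bounded; auto].
  apply (nodes_le n tt Ht); lia.
Qed.

Definition hat_sum (t : R) : R := sum1n n (fun j => Rabs (HH j t)).

Lemma hat_sum_bounded : exists U, forall s, tt 1%nat <= s <= tt n -> Rabs (hat_sum s) <= U.
Proof.
  exists (sum1n n (fun _ => 1)). intros s Hs. unfold hat_sum.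
  eapply Rle_trans; [apply sum1n_abs|]. apply sum1n_le. intros j Hj.
  rewrite Rabs_Rabsolu. destruct (hat_bounds j s Hj Hs). rewrite Rabs_right; lra.
Qed.

(* Writing P f = sum_j a_j H_j gives |P f| <= max_j |a_j| * hat_sum pointwise. *)
Lemma proj_ratio_bound f : cont_on (tt 1%nat) (tt n) f ->
  (exists t, tt 1%nat <= t <= tt n /\ f t <> 0) ->
  supnorm (tt 1%nat) (tt n) (orth_proj p (tt 1%nat) (tt n) n HH f) / supnorm (tt 1%nat) (tt n) f <=
  supnorm (tt 1%nat) (tt n) hat_sum * (CD_max / (1 - c)).
Proof.
  intros Hf [t0 [Ht0 Hf0]].
  assert (H1n : tt 1%nat <= tt n) by (apply (nodes_le n tt Ht); lia).
  set (g := orth_proj p (tt 1%nat) (tt n) n HH f).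
  destruct (orth_proj_spec f Hf) as [[a Ha] Horth]. fold g in Ha, Horth.
  set (N := supnorm (tt 1%nat) (tt n) f).
  assert (HN : 0 < N).
  { assert (Rabs (f t0) <= N) by (apply supnorm_ge; [apply cont_on_bounded|]; auto).
    pose proof (Rabs_pos_lt _ Hf0). lra. }
  assert (Hcoef : forall k, (1 <= k <= n)%nat -> Rabs (a k) <= N * CD_max / (1 - c)).
  { apply proj_coef_bound; auto. intros i Hi.
    assert (Res : rhs f i - trirow n gram_d gram_e a i = 0).
    { rewrite <- residual_eq, <- (Horth i Hi) by auto. unfold ip. apply RInt_ext.
      intros x _. rewrite (Ha x). reflexivity. }
    lra. }
  set (M := N * CD_max / (1 - c)).
  assert (HM : 0 <= M) by (eapply Rle_trans; [apply Rabs_pos | apply (Hcoef 1%nat); lia]).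
  assert (Hg : supnorm (tt 1%nat) (tt n) g <= M * supnorm (tt 1%nat) (tt n) hat_sum).
  { apply supnorm_le; auto. intros s Hs. rewrite Ha.
    apply Rle_trans with (sum1n n (fun j => M * Rabs (HH j s))).
    - eapply Rle_trans; [apply sum1n_abs | apply sum1n_le]. intros j Hj.
      rewrite Rabs_mult. apply Rmult_le_compat_r; [apply Rabs_pos | auto].
    - rewrite sum1n_scal. apply Rmult_le_compat_l; auto.
      apply Rle_trans with (Rabs (hat_sum s)); [apply Rle_abs|].
      apply supnorm_ge; auto. apply hat_sum_bounded. }
  apply (Rmult_le_reg_r N); auto.
  replace (supnorm (tt 1%nat) (tt n) g / N * N) with (supnorm (tt 1%nat) (tt n) g) by (field; lra).
  unfold M in Hg. replace (supnorm (tt 1%nat) (tt n) hat_sum * (CD_max / (1 - c)) * N)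
    with (N * CD_max / (1 - c) * supnorm (tt 1%nat) (tt n) hat_sum) by (field; lra).
  exact Hg.
Qed.

Lemma opnorm_bound : Rbar_le (opnorm_proj p (tt 1%nat) (tt n) n HH)
  (Finite (supnorm (tt 1%nat) (tt n) hat_sum * (CD_max / (1 - c)))).
Proof.
  unfold opnorm_proj. apply Lub_Rbar_correct.
  intros r [f [Hf [Hnz ->]]]. apply proj_ratio_bound; auto.
Qed.
End Hats.

Theorem mainTheorem13
  (delta : R) (n : nat) (p : R) (phi : nat -> R -> R) (tt : nat -> R) (c : R)
  (Hdelta : 0 < delta) (Hn : (3 <= n)%nat)
  (Hphi_cont : forall j, (1 <= j <= n - 1)%nat -> cont_on (- delta) delta (phi j))
  (Hphi_incr : forall j, (1 <= j <= n - 1)%nat ->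
     forall x y, - delta <= x <= delta -> - delta <= y <= delta -> x < y ->
       phi j x < phi j y)
  (Hphi0 : forall j, (1 <= j <= n - 1)%nat -> phi j 0 = 0)
  (Ht : forall j, (1 <= j <= n - 1)%nat -> tt j < tt (S j))
  (Hh : forall j, (1 <= j <= n - 1)%nat -> tt (S j) - tt j <= delta)
  (Hc : 0 < c < 1)
  (HAB : max1n (n - 1) (fun j => Rmax (Aphi p (phi j) (tt (S j) - tt j))
                                      (Bphi p (phi j) (tt (S j) - tt j))) <= c) :
  row_diag_dom n (fun i j => ip p (tt 1%nat) (tt n) (hat n phi tt i) (hat n phi tt j)) c /\
  Rbar_le (opnorm_proj p (tt 1%nat) (tt n) n (hat n phi tt))
    (Finite (supnorm (tt 1%nat) (tt n) (fun t => sum1n n (fun j => Rabs (hat n phi tt j t))) *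
             (max1n (n - 1) (fun j => Rmax (Cphi p (phi j) (tt (S j) - tt j))
                                           (Dphi p (phi j) (tt (S j) - tt j))) / (1 - c)))).
Proof.
  assert (H2n : (2 <= n)%nat) by lia.
  split.
  - apply (gram_row_dominant delta n p phi tt); assumption.
  - apply (opnorm_bound delta n p phi tt); assumption.
Qed.
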